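(* Let $\varphi\in\mathcal{L}$. If there is a notional graded doxastic model (NGDM) $M$ and a world $w$ of $M$ with $(M,w)\models\varphi$, then there is a multi-agent graded belief model (MAGBM) $(S,U)$ with $(S,U)\models\varphi$.
   Context: Fix a countably infinite set of atoms $\mathit{Atm}$ and a finite set of agents $\mathit{Agt}=\{1,\dots,n\}$; a group is a non-empty subset $J\subseteq\mathit{Agt}$, $2^{\mathit{Agt}*}$ the set of groups. $\mathbb{N}_0$ (resp. $\mathbb{N}_1$) are the naturals with (resp. without) $0$; $\mathbb{N}_0^{\omega}=\mathbb{N}_0\cup\{\omega\}$, $\mathbb{N}_1^{\omega}=\mathbb{N}_1\cup\{\omega\}$ with $\omega$ infinite. A multiset over $X$ is a function $X\to\mathbb{N}_0^{\omega}$. A possibly infinite sum of grades equals the sum of its non-zero summands if there are finitely many and none is $\omega$, and $\omega$ otherwise. $\mathcal{L}_0$: $\alpha::=p\mid\neg\alpha\mid\alpha\wedge\alpha\mid\triangle_i^k\alpha$ ($p\in\mathit{Atm}$, $i\in\mathit{Agt}$, $k\in\mathbb{N}_1^{\omega}$). $\mathcal{L}$: $\varphi::=\alpha\mid\neg\varphi\mid\varphi\wedge\varphi\mid\Box_J^k\varphi$ ($\alpha\in\mathcal{L}_0$, $J$ a group, $k\in\mathbb{N}_0$). MAGBM semantics: a state is $S=(\mathcal{B}_1,\dots,\mathcal{B}_n,V)$ with each $\mathcal{B}_i$ a multiset over $\mathcal{L}_0$ (agent $i$'s graded belief base) and $V\subseteq\mathit{Atm}$; $\mathbf{S}$ is the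 set of states. $S\models p$ iff $p\in V$; Boolean clauses as usual; $S\models\triangle_i^k\alpha$ iff $\mathcal{B}_i(\alpha)\ge k$. For a group $J$, $\mathcal{B}_J(\alpha)=\sum_{i\in J}\mathcal{B}_i(\alpha)$. For $k\in\mathbb{N}_0$, $S\mathcal{R}_J^kS'$ iff $\sum_{\alpha\in\mathcal{L}_0,S'\not\models\alpha}\mathcal{B}_J(\alpha)\le k$. An MAGBM is a pair $(S,U)$ with $S\in\mathbf{S}$, $U\subseteq\mathbf{S}$; $(S,U)\models\alpha$ iff $S\models\alpha$ for $\alpha\in\mathcal{L}_0$; Boolean clauses as usual; $(S,U)\models\Box_J^k\varphi$ iff for all $S'\in U$ with $S\mathcal{R}_J^kS'$, $(S',U)\models\varphi$. NGDM: a tuple $M=(W,\mathcal{D},\rho,\mathcal{V})$ with $W$ a set of worlds, $\mathcal{D}:\mathit{Agt}\times W\to$ (multisets over $\mathcal{L}_0$), $\rho:2^{\mathit{Agt}*}\times W\times W\to\mathbb{N}_0^{\omega}$, $\mathcal{V}:\mathit{Atm}\to2^W$, with satisfaction $(M,w)\models p$ iff $w\in\mathcal{V}(p)$; Boolean clauses as usual; $(M,w)\models\triangle_i^k\alpha$ iff $\mathcal{D}(i,w)(\alpha)\ge k$; $(M,w)\models\Box_J^k\varphi$ iff for all $u\in W$ with $\rho(J,w,u)\le k$, $(M,u)\models\varphi$; and such that for all groups $J$ and $w,u\in W$, $\rho(J,w,u)=\sum_{\alpha\in\mathcal{L}_0,(M,u)\not\models\alpha}\sum_{i\in J}\mathcal{D}(i,w)(\alpha)$.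 *)

From mathcomp Require Import all_boot.
From Stdlib Require Import ClassicalEpsilon.
From Stdlib Require List.

Set Implicit Arguments.
Unset Strict Implicit.
Unset Printing Implicit Defensive.

Inductive natw : Type := Fin of nat | Omega.

Definition natw_le (a b : natw) : Prop :=
  match a, b with
  | _, Omega => True
  | Omega, Fin _ => False
  | Fin x, Fin y => is_true (x <= y)
  end.

Record natw1 : Type := { val1 : natw; val1_nz : val1 <> Fin 0 }.

(** Possibly infinite sum of grades over an arbitrary index type X:
    the sum of the non-zero summands if there are finitely many and none is
    omega, and omega otherwise. *)
Definition finite_support {X : Type} (f : X -> natw) (l : list X) : Prop :=
  List.NoDup l /\ (forall x, List.In x l <-> f x <> Fin 0)
  /\ (forall x, List.In x l -> f x <> Omega).

Definition sum_list {X : Type} (f : X -> natw) (l : list X) : nat :=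
  List.fold_right (fun x acc => match f x with Fin m => m + acc | Omega => acc end) 0 l.

Definition gsum {X : Type} (f : X -> natw) : natw :=
  match excluded_middle_informative (exists l, finite_support f l) with
  | left H => Fin (sum_list f (proj1_sig (constructive_indefinite_description _ H)))
  | right _ => Omega
  end.

(** Atoms: countably infinite set, represented by nat. Agents: 'I_n (n agents). *)
Definition Atm := nat.

Record group (n : nat) : Type := { gset : {set 'I_n}; gset_nz : gset != set0 }.

Inductive L0 (n : nat) : Type :=
| Atom of Atm
| Neg0 of L0 n
| And0 of L0 n & L0 n
| Tri of 'I_n & natw1 & L0 n.

Inductive L (n : nat) : Type :=
| Base of L0 n
| Neg of L n
| And of L n & L n
| Box of group n & nat & L n.

Definition multiset (n : nat) := L0 n -> natw.

Record state (n : nat) : Type := { Bst : 'I_n -> multiset n; Vst : Atm -> Prop }.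

Fixpoint sat0 {n} (S : state n) (a : L0 n) : Prop :=
  match a with
  | Atom p => Vst S p
  | Neg0 b => ~ sat0 S b
  | And0 b c => sat0 S b /\ sat0 S c
  | Tri i k b => natw_le (val1 k) (Bst S i b)
  end.

Definition BJ {n} (B : 'I_n -> multiset n) (J : group n) (a : L0 n) : natw :=
  gsum (fun i : 'I_n => if i \in gset J then B i a else Fin 0).

Definition sum_unsat {n} (sat : L0 n -> Prop) (f : L0 n -> natw) : natw :=
  gsum (fun a : L0 n => if excluded_middle_informative (sat a) then Fin 0 else f a).

Definition Rel {n} (J : group n) (k : nat) (S S' : state n) : Prop :=
  natw_le (sum_unsat (sat0 S') (BJ (Bst S) J)) (Fin k).

Fixpoint sat_magbm {n} (S : state n) (U : state n -> Prop) (phi : L n) : Prop :=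
  match phi with
  | Base a => sat0 S a
  | Neg psi => ~ sat_magbm S U psi
  | And psi chi => sat_magbm S U psi /\ sat_magbm S U chi
  | Box J k psi => forall S', U S' -> Rel J k S S' -> sat_magbm S' U psi
  end.

Record pre_ngdm (n : nat) : Type := {
  W : Type;
  Dm : 'I_n -> W -> multiset n;
  rho : group n -> W -> W -> natw;
  Vm : Atm -> W -> Prop }.

Fixpoint sat0_M {n} (M : pre_ngdm n) (w : W M) (a : L0 n) : Prop :=
  match a with
  | Atom p => @Vm n M p w
  | Neg0 b => ~ @sat0_M n M w b
  | And0 b c => @sat0_M n M w b /\ @sat0_M n M w c
  | Tri i k b => natw_le (val1 k) (@Dm n M i w b)
  end.

Fixpoint sat_M {n} (M : pre_ngdm n) (w : W M) (phi : L n) : Prop :=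
  match phi with
  | Base a => @sat0_M n M w a
  | Neg psi => ~ @sat_M n M w psi
  | And psi chi => @sat_M n M w psi /\ @sat_M n M w chi
  | Box J k psi => forall u, natw_le (@rho n M J w u) (Fin k) -> @sat_M n M u psi
  end.

Definition is_ngdm {n} (M : pre_ngdm n) : Prop :=
  forall (J : group n) (w u : W M),
    @rho n M J w u = sum_unsat (@sat0_M n M u) (BJ (fun i => @Dm n M i w) J).

From mathcomp Require Import all_boot.
From Stdlib Require Import FunctionalExtensionality.

(* Each world w of an NGDM becomes the state made of its belief bases and
   valuation; the NGDM constraint says precisely that rho(J, w, u) is the
   quantity bounded by the MAGBM relation R_J^k between the states of w and u.
   Taking U to be the set of all such states, truth is preserved. *)

Section NgdmToMagbm.

Context {n : nat} {M : pre_ngdm n}.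

Definition state_of (u : W M) : state n :=
  {| Bst := fun i => Dm i u; Vst := fun p => Vm p u |}.

Definition states_of (S : state n) : Prop := exists u : W M, S = state_of u.

Lemma sat0_state_of (u : W M) : sat0 (state_of u) = sat0_M u.
Proof.
apply: functional_extensionality => a.
elim: a => [p | b IHb | b IHb c IHc | i k b _] //=; by rewrite ?IHb ?IHc.
Qed.

Hypothesis ngdmM : is_ngdm M.

Lemma Rel_state_of (J : group n) (k : nat) (w u : W M) :
  Rel J k (state_of w) (state_of u) = natw_le (rho J w u) (Fin k).
Proof. by rewrite /Rel sat0_state_of ngdmM. Qed.

Lemma sat_magbm_state_of (phi : L n) (u : W M) :
  sat_magbm (state_of u) states_of phi <-> sat_M u phi.
Proof.
elim: phi u => [a | psi IH | psi IHpsi chi IHchi | J k psi IH] u /=.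
- by rewrite sat0_state_of.
- by rewrite IH.
- by rewrite IHpsi IHchi.
- split=> [Hbox v | Hbox _ [v ->]].
  + by rewrite -Rel_state_of -IH; apply: Hbox; exists v.
  + by rewrite Rel_state_of IH; apply: Hbox.
Qed.

End NgdmToMagbm.

Theorem lemma3 (n : nat) (phi : L n) (M : pre_ngdm n) (w : W M) :
  is_ngdm M -> @sat_M n M w phi ->
  exists (S : state n) (U : state n -> Prop), sat_magbm S U phi.
Proof.
move=> ngdmM satw.
exists (state_of w), (@states_of n M).
exact/(sat_magbm_state_of ngdmM).
Qed.
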